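(* Let $\mathfrak g$ be a barrelled locally convex Lie algebra, $(\pi,V)$ a continuous unitary representation of $\mathfrak g$, and $n\in\mathbb N\cup\{\infty\}$. Let $t\mapsto\xi_t$ be a $C^n$-curve in $\mathfrak g$ and $t\mapsto\psi_t$ a $C^n$-curve in $V$ for the strong (resp. weak) topology, both defined on a common real interval. Then $t\mapsto\pi(\xi_t)\psi_t$ is a $C^n$-curve in $V$ for the strong (resp. weak) topology, and for all integers $0\le k\le n$, $$\frac{d^k}{dt^k}\pi(\xi_t)\psi_t=\sum_{j=0}^{k}\binom{k}{j}\pi\big(\xi^{(j)}_t\big)\psi^{(k-j)}_t.$$
   Context: Barrelled: every closed, convex, circled, absorbing subset is a $0$-neighbourhood. A unitary representation $(\pi,V)$ of $\mathfrak g$: $V$ complex pre-Hilbert (completion $\mathcal H_V$), $\pi\colon\mathfrak g\to\mathrm{End}(V)$ a Lie algebra homomorphism with skew-symmetric values. $\pi_n(\xi_n,\dots,\xi_1)=\pi(\xi_n)\cdots\pi(\xi_1)$, $\pi_0(\lambda)=\lambda\mathbf 1$. Continuous: $\boldsymbol\xi\mapsto\pi_n(\boldsymbol\xi)\psi$, $\mathfrak g^n\to\mathcal H_V$, norm continuous for all $n,\psi$. Weak topology: seminorms $\|\pi_n(\boldsymbol\xi)\psi\|$, $\boldsymbol\xi\in\mathfrak g^n$; strong topology: seminorms $\sup_{\boldsymbol\xi\in B}\|\pi_n(\boldsymbol\xi)\psi\|$, $B\subseteq\mathfrak g^n$ bounded. $C^n$-curves into a locally convex space: iterated derivatives (limits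 of difference quotients) up to order $n$ exist and are continuous. *)

From HB Require Import structures.
From mathcomp Require Import all_boot all_order all_algebra.
From mathcomp Require Import all_classical all_reals.
From mathcomp Require Import all_analysis.
From mathcomp Require Import complex.

Set Implicit Arguments.
Unset Strict Implicit.
Unset Printing Implicit Defensive.

Import Order.TTheory GRing.Theory Num.Theory.
Import numFieldNormedType.Exports.
Local Open Scope classical_set_scope.
Local Open Scope ring_scope.

(** A real locally convex Lie algebra: a locally convex topological vector
    space [g] over [R] (mathcomp's [tvsType], which is locally convex by
    definition) with a Lie bracket [br] that is bilinear, alternating,
    satisfies the Jacobi identity and is jointly continuous. *)
Definition lie_bracket (R : realType) (g : tvsType R) (br : g -> g -> g) :=
  [/\ (forall (a : R) x y z, br (a *: x + y) z = a *: br x z + br y z),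
      (forall (a : R) x y z, br z (a *: x + y) = a *: br z x + br z y),
      (forall x, br x x = 0),
      (forall x y z, br x (br y z) + br y (br z x) + br z (br x y) = 0) &
      continuous (fun p : g * g => br p.1 p.2)].

Definition circled (R : realType) (g : tvsType R) (A : set g) :=
  forall (l : R) x, `|l| <= 1 -> A x -> A (l *: x).

Definition absorbing (R : realType) (g : tvsType R) (A : set g) :=
  forall x : g, exists2 r : R, 0 < r & forall l : R, `|l| <= r -> A (l *: x).

Definition barrelled (R : realType) (g : tvsType R) :=
  forall A : set g, closed A -> convex_set A -> circled A -> absorbing A ->
    nbhs (0 : g) A.

(** Bounded subsets of [g^n] (product topology): for every 0-neighbourhood
    [U] of [g] there is [r > 0] with [B ⊆ t U^n] for all [t > r]. *)
Definition bounded_tuples (R : realType) (g : tvsType R) (n : nat)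
    (B : set ('I_n -> g)) :=
  forall U : set g, nbhs (0 : g) U ->
    exists2 r : R, 0 < r & forall t : R, r < t ->
      forall xs, B xs -> forall i, U (t^-1 *: xs i).

Local Open Scope complex_scope.

Definition inner_product (R : realType) (V : lmodType R[i])
    (ip : V -> V -> R[i]) :=
  [/\ (forall (a : R[i]) u v w, ip (a *: u + v) w = a * ip u w + ip v w),
      (forall u v, ip u v = (ip v u)^*),
      (forall v, 0 <= ip v v) &
      (forall v, ip v v = 0 -> v = 0)].

Definition ipnorm (R : realType) (V : lmodType R[i]) (ip : V -> V -> R[i])
    (v : V) : R := Num.sqrt (complex.Re (ip v v)).

(** pi_n(xs) psi = pi(xs 0) (pi (xs 1) ( ... pi (xs (n-1)) psi)).
    (The paper writes pi_n(xi_n,...,xi_1) = pi(xi_n)...pi(xi_1); we index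
    the arguments from the outermost one.)  For [n = 0] this is [psi]. *)
Definition pin (R : realType) (g : tvsType R) (V : lmodType R[i])
    (pi : g -> V -> V) (n : nat) (xs : 'I_n -> g) (psi : V) : V :=
  foldr (fun i v => pi (xs i) v) psi (enum 'I_n).

Definition unitary_rep (R : realType) (g : tvsType R) (br : g -> g -> g)
    (V : lmodType R[i]) (ip : V -> V -> R[i]) (pi : g -> V -> V) :=
  [/\ (forall x (a : R[i]) u v, pi x (a *: u + v) = a *: pi x u + pi x v),
      (forall (a : R) x y v, pi (a *: x + y) v = a%:C *: pi x v + pi y v),
      (forall x y v, pi (br x y) v = pi x (pi y v) - pi y (pi x v)) &
      (forall x u v, ip (pi x u) v = - ip u (pi x v))].

Definition continuous_rep (R : realType) (g : tvsType R)
    (V : lmodType R[i]) (ip : V -> V -> R[i]) (pi : g -> V -> V) :=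
  forall (n : nat) (psi : V) (xs : 'I_n -> g) (eps : R), 0 < eps ->
    exists U : 'I_n -> set g, (forall i, nbhs (xs i) (U i)) /\
      forall ys : 'I_n -> g, (forall i, U i (ys i)) ->
        ipnorm ip (pin pi ys psi - pin pi xs psi) < eps.

Inductive topV := Strong | Weak.

(** index sets of the defining seminorms
    [psi |-> sup_{xs in B} ||pi_n(xs) psi||]:
    bounded [B] for the strong topology, singletons for the weak one. *)
Definition admissible (R : realType) (g : tvsType R) (tau : topV) (n : nat)
    (B : set ('I_n -> g)) : Prop :=
  match tau with
  | Strong => bounded_tuples B
  | Weak => exists xs, B = [set xs]
  end.

Definition cvgV (R : realType) (g : tvsType R) (V : lmodType R[i])
    (ip : V -> V -> R[i]) (pi : g -> V -> V) (tau : topV)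
    (f : R -> V) (F : set_system R) (l : V) :=
  forall (n : nat) (B : set ('I_n -> g)), admissible tau B ->
    forall eps : R, 0 < eps ->
      \forall h \near F, forall xs, B xs -> ipnorm ip (pin pi xs (f h - l)) <= eps.

(** [n ∈ ℕ ∪ {∞}] : [None] stands for [∞] *)
Definition le_ext (j : nat) (n : option nat) : bool :=
  if n is Some m then (j <= m)%N else true.
Definition lt_ext (j : nat) (n : option nat) : bool :=
  if n is Some m then (j < m)%N else true.

Definition CnV (R : realType) (g : tvsType R) (V : lmodType R[i])
    (ip : V -> V -> R[i]) (pi : g -> V -> V) (tau : topV)
    (I : interval R) (n : option nat) (ds : nat -> R -> V) :=
  (forall j, le_ext j n -> forall t, t \in I ->
     cvgV ip pi tau (ds j) (within [set s | s \in I] (nbhs t)) (ds j t)) /\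
  (forall j, lt_ext j n -> forall t, t \in I ->
     cvgV ip pi tau (fun s => (s - t)^-1%:C *: (ds j s - ds j t))
       (within [set s | s \in I /\ s != t] (nbhs t)) (ds j.+1 t)).

Definition Cng (R : realType) (g : tvsType R)
    (I : interval R) (n : option nat) (ds : nat -> R -> g) :=
  (forall j, le_ext j n -> forall t, t \in I ->
     ds j @ within [set s | s \in I] (nbhs t) --> ds j t) /\
  (forall j, lt_ext j n -> forall t, t \in I ->
     (fun s => (s - t)^-1 *: (ds j s - ds j t))
       @ within [set s | s \in I /\ s != t] (nbhs t) --> ds j.+1 t).

From Pilot Require Import Defs.
From HB Require Import structures.
From mathcomp Require Import all_boot all_order all_algebra.
From mathcomp Require Import all_classical all_reals all_analysis.
From mathcomp Require Import complex.
From mathcomp Require Import ring lra.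
Import Order.TTheory GRing.Theory Num.Theory.
Import numFieldNormedType.Exports.

Set Implicit Arguments.
Unset Strict Implicit.
Unset Printing Implicit Defensive.

Local Open Scope classical_set_scope.
Local Open Scope ring_scope.
Local Open Scope complex_scope.

(* The difference quotient of [pi(xi_s)psi_s] at [t] is
   [pi(xi_s)((psi_s - psi_t)/(s - t)) + pi((xi_s - xi_t)/(s - t))psi_t], so the
   product rule reduces to the joint continuity of [(xi, psi) |-> pi(xi)psi]
   along converging curves, uniformly on the sets [B] defining the seminorms
   of [V].  Write [pi(a)b - pi(a0)b0] as
   [pi(a0)(b - b0) + pi(a - a0)(b - b0) + pi(a - a0)b0].  The first term is
   controlled by the seminorms of [V] themselves, the last one by continuity
   of [pi_(n+1)] at [0] and homogeneity of [pi_n].  For the mixed term it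
   suffices, [t] having a countable neighbourhood basis, to treat sequences
   [eta_k -> 0] in [g] and [w_k -> 0] in [V]: the set of [e] with
   [sup_k sup_(xs in B) ||pi_n(xs)pi(e)w_k|| <= 1] is a barrel, hence a
   0-neighbourhood because [g] is barrelled.  The Leibniz formula then follows
   by Pascal's rule. *)

Lemma Re_realM (R : rcfType) (l : R) (z : R[i]) :
  complex.Re (l%:C * z) = l * complex.Re z.
Proof. by case: z => x y /=; rewrite mul0r subr0. Qed.

Lemma Re_conjc (R : rcfType) (z : R[i]) : complex.Re z^* = complex.Re z.
Proof. by case: z. Qed.

Section PreHilbert.
Variables (R : realType) (V : lmodType R[i]) (ip : V -> V -> R[i]).
Hypothesis ip_inner : inner_product ip.

Local Notation b u v := (complex.Re (ip u v)).
Local Notation N := (ipnorm ip).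

Let Re_ipZDl (l : R) u v w : b (l%:C *: u + v) w = l * b u w + b v w.
Proof. by case: ip_inner => ipZD _ _ _; rewrite ipZD raddfD /= Re_realM. Qed.

Let Re_ipC u v : b u v = b v u.
Proof. by case: ip_inner => _ ipC _ _; rewrite ipC Re_conjc. Qed.

Let Re_ip_ge0 u : 0 <= b u u.
Proof. by case: ip_inner => _ _ ip_ge0 _; have := ip_ge0 u; rewrite lecE => /andP[]. Qed.

Let Re_ipDl u v w : b (u + v) w = b u w + b v w.
Proof. by rewrite -[u]scale1r Re_ipZDl mul1r scale1r. Qed.

Let Re_ipZl (l : R) u w : b (l%:C *: u) w = l * b u w.
Proof.
have Re_ip0 : b 0 w = 0 by have := Re_ipDl 0 0 w; rewrite addr0; lra.
by rewrite -[_ *: u]addr0 Re_ipZDl Re_ip0 addr0.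
Qed.

Let Re_ipZr (l : R) u w : b w (l%:C *: u) = l * b w u.
Proof. by rewrite Re_ipC Re_ipZl Re_ipC. Qed.

Let Re_ipDr u v w : b w (u + v) = b w u + b w v.
Proof. by rewrite Re_ipC Re_ipDl !(Re_ipC w). Qed.

Lemma Re_ip_CauchySchwarz u v : b u v ^+ 2 <= b u u * b v v.
Proof.
have quad l : 0 <= b u u + 2 * l * b u v + l ^+ 2 * b v v.
  have := Re_ip_ge0 (u + l%:C *: v).
  by rewrite Re_ipDl !Re_ipDr !Re_ipZl !Re_ipZr (Re_ipC v u); lra.
have [vv0|vv_neq0] := eqVneq (b v v) 0.
  rewrite vv0 mulr0; have [->|uv_neq0] := eqVneq (b u v) 0; first by rewrite expr0n.
  have := quad (- (b u u + 1) / (2 * b u v)); rewrite vv0 mulr0 addr0.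
  have -> : 2 * (- (b u u + 1) / (2 * b u v)) * b u v = - (b u u + 1).
    by field; rewrite uv_neq0.
  lra.
have vv_gt0 : 0 < b v v by rewrite lt_neqAle eq_sym vv_neq0 Re_ip_ge0.
have := quad (- b u v / b v v).
have -> : b u u + 2 * (- b u v / b v v) * b u v + (- b u v / b v v) ^+ 2 * b v v
   = b u u - b u v ^+ 2 / b v v by field.
by rewrite subr_ge0 ler_pdivrMr // mulrC.
Qed.

Lemma ipnorm_ge0 v : 0 <= N v.
Proof. exact: sqrtr_ge0. Qed.

Lemma ler_ipnormD u v : N (u + v) <= N u + N v.
Proof.
rewrite /ipnorm; set su := Num.sqrt (b u u); set sv := Num.sqrt (b v v).
have su_ge0 : 0 <= su by exact: sqrtr_ge0.
have sv_ge0 : 0 <= sv by exact: sqrtr_ge0.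
have su2 : su ^+ 2 = b u u by rewrite sqr_sqrtr.
have sv2 : sv ^+ 2 = b v v by rewrite sqr_sqrtr.
have uv_le : b u v <= su * sv.
  have : b u v ^+ 2 <= (su * sv) ^+ 2.
    by rewrite exprMn su2 sv2; exact: Re_ip_CauchySchwarz.
  have : 0 <= su * sv by rewrite mulr_ge0.
  nra.
rewrite -(ger0_norm (addr_ge0 su_ge0 sv_ge0)) -sqrtr_sqr ler_sqrt ?sqr_ge0 //.
rewrite Re_ipDl !Re_ipDr (Re_ipC v u) -su2 -sv2; lra.
Qed.

Lemma ipnormZ (l : R) v : N (l%:C *: v) = `|l| * N v.
Proof.
rewrite /ipnorm Re_ipZl Re_ipZr mulrA -expr2.
by rewrite sqrtrM ?sqr_ge0 // sqrtr_sqr.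
Qed.

Lemma ipnorm0 : N 0 = 0.
Proof. by rewrite -(scale0r 0) -(rmorph0 (real_complex R)) ipnormZ normr0 mul0r. Qed.

Lemma ipnormN v : N (- v) = N v.
Proof. by rewrite -scaleN1r -(rmorphN1 (real_complex R)) ipnormZ normrN1 mul1r. Qed.

Lemma ipnorm_distC u v : N (u - v) = N (v - u).
Proof. by rewrite -ipnormN opprB. Qed.

Lemma ler_ipnorm_dist u v : N u <= N (u - v) + N v.
Proof. by have := ler_ipnormD (u - v) v; rewrite subrK. Qed.

End PreHilbert.

Section Snoc.
Variable T : Type.

Definition snoc n (xs : 'I_n -> T) (e : T) (i : 'I_n.+1) : T :=
  if unlift ord_max i is Some j then xs j else e.

Lemma snoc_lift n (xs : 'I_n -> T) e j : snoc xs e (lift ord_max j) = xs j.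
Proof. by rewrite /snoc liftK. Qed.

Lemma snoc_max n (xs : 'I_n -> T) e : snoc xs e ord_max = e.
Proof. by rewrite /snoc unlift_none. Qed.

End Snoc.

Section TopologicalVectorSpace.
Variables (R : realType) (g : tvsType R).

Lemma scale_cvg0 (x : g) : (fun l : R => l *: x) @ (0 : R) --> (0 : g).
Proof.
rewrite -(scale0r x).
apply: (@continuous2_cvg R R^o g g (nbhs (0 : R)) _ id (fun=> x) (fun l y => l *: y) 0 x).
- exact: (@scale_continuous R g (0, x)).
- exact: cvg_id.
- exact: cvg_cst.
Qed.

Lemma cvg_subr0 (T : Type) (F : set_system T) {FF : Filter F} (a : T -> g) a0 :
  a @ F --> a0 -> (fun s => a s - a0) @ F --> (0 : g).
Proof.
move=> Ha; rewrite -(subrr a0).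
apply: (@continuous2_cvg _ _ _ _ _ _ _ _ (fun x y : g => x - y)) => //.
  exact: (@sub_continuous g (a0, a0)).
exact: cvg_cst.
Qed.

Lemma bounded_tuples_set1 n (xs : 'I_n -> g) : bounded_tuples [set xs].
Proof.
move=> U U0.
have /nbhs_ballP[e e_gt0 small] : \forall l \near (0 : R), forall i, U (l *: xs i).
  exact: (@filter_forall _ _ (fun i l => U (l *: xs i)) _ _
           (fun i => scale_cvg0 (xs i) U0)).
exists e^-1 => [|t lt_et _ -> i]; first by rewrite invr_gt0.
have t_gt0 : 0 < t by apply: lt_trans lt_et; rewrite invr_gt0.
apply: small; rewrite /ball /= sub0r normrN ger0_norm ?invr_ge0 ?ltW //.
by rewrite invf_plt.
Qed.

Lemma bounded_tuples_snoc n (B : set ('I_n -> g)) e :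
  bounded_tuples B -> bounded_tuples ((fun xs => snoc xs e) @` B).
Proof.
move=> HB U U0.
have [r1 r1_gt0 H1] := HB U U0.
have [r2 r2_gt0 H2] := bounded_tuples_set1 (fun _ : 'I_1 => e) U0.
exists (Num.max r1 r2) => [|t]; first by rewrite lt_max r1_gt0.
rewrite gt_max => /andP[t1 t2] _ [xs Bxs <-] i.
case: (unliftP ord_max i) => [j ->|->]; first by rewrite snoc_lift; exact: H1.
by rewrite snoc_max; exact: (H2 t t2 _ erefl ord0).
Qed.

Lemma admissible_bounded tau n (B : set ('I_n -> g)) :
  admissible tau B -> bounded_tuples B.
Proof. by case: tau => //= -[xs ->]; exact: bounded_tuples_set1. Qed.

Lemma admissible_snoc tau n (B : set ('I_n -> g)) e :
  admissible tau B -> admissible tau ((fun xs => snoc xs e) @` B).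
Proof.
case: tau => /=; first exact: bounded_tuples_snoc.
by case=> xs ->; exists (snoc xs e); rewrite image_set1.
Qed.

End TopologicalVectorSpace.

Lemma within_nbhs_seq (R : realType) (A Q : set R) (t : R) :
  (forall u : nat -> R, u @ \oo --> within A (nbhs t) -> \forall k \near \oo, Q (u k)) ->
  \forall s \near within A (nbhs t), Q s.
Proof.
move=> seqQ; apply: contrapT => notQ.
have bad k : exists s, `|t - s| < k.+1%:R^-1 /\ A s /\ ~ Q s.
  apply: contrapT => /forallNP no_bad; apply: notQ; apply/nbhs_ballP.
  exists k.+1%:R^-1 => /= [|s ts As]; first by rewrite invr_gt0 ltr0Sn.
  by have /not_andP[//|/not_andP[//|/contrapT]] := no_bad s.
have [u u_bad] := choice bad.
have u_cvg : u @ \oo --> within A (nbhs t).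
  move=> P /nbhs_ballP[e e_gt0 eP].
  apply: filterS (near_infty_natSinv_lt (PosNum e_gt0)) => k ke.
  have [tuk [Auk _]] := u_bad k.
  by apply: eP Auk; rewrite /ball /=; exact: lt_trans tuk ke.
have [k _ Qu] := seqQ u u_cvg.
by have [_ [_]] := u_bad k; apply; exact: Qu k (leqnn k).
Qed.

Section Representation.
Variables (R : realType) (g : tvsType R) (br : g -> g -> g)
  (V : lmodType R[i]) (ip : V -> V -> R[i]) (pi : g -> V -> V).
Hypothesis ip_inner : inner_product ip.
Hypothesis pi_rep : unitary_rep br ip pi.
Hypothesis pi_cont : continuous_rep ip pi.
Hypothesis g_barrelled : barrelled g.

Local Notation N := (ipnorm ip).

Lemma repD x u v : pi x (u + v) = pi x u + pi x v.
Proof. by case: pi_rep => piZD _ _ _; have := piZD x 1 u v; rewrite !scale1r. Qed.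

Lemma rep0 x : pi x 0 = 0.
Proof. by apply: (addrI (pi x 0)); rewrite -repD !addr0. Qed.

Lemma repZ x a u : pi x (a *: u) = a *: pi x u.
Proof. by case: pi_rep => piZD _ _ _; rewrite -[a *: u]addr0 piZD rep0 addr0. Qed.

Lemma repB x u v : pi x (u - v) = pi x u - pi x v.
Proof. by rewrite repD -scaleN1r repZ scaleN1r. Qed.

Lemma repDl x y v : pi (x + y) v = pi x v + pi y v.
Proof.
by case: pi_rep => _ piZDl _ _; have := piZDl 1 x y v; rewrite !scale1r.
Qed.

Lemma rep0l v : pi 0 v = 0.
Proof. by apply: (addrI (pi 0 v)); rewrite -repDl !addr0. Qed.

Lemma repZl (a : R) x v : pi (a *: x) v = a%:C *: pi x v.
Proof. by case: pi_rep => _ piZDl _ _; rewrite -[a *: x]addr0 piZDl rep0l addr0. Qed.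

Lemma repBl x y v : pi (x - y) v = pi x v - pi y v.
Proof. by rewrite repDl -(scaleN1r y) repZl rmorphN1 scaleN1r. Qed.

Lemma pinD n (xs : 'I_n -> g) u v : pin pi xs (u + v) = pin pi xs u + pin pi xs v.
Proof. by rewrite /pin; elim: (enum 'I_n) => //= i s ->; rewrite repD. Qed.

Lemma pin0 n (xs : 'I_n -> g) : pin pi xs 0 = 0.
Proof. by apply: (addrI (pin pi xs 0)); rewrite -pinD !addr0. Qed.

Lemma pinZ n (xs : 'I_n -> g) a u : pin pi xs (a *: u) = a *: pin pi xs u.
Proof. by rewrite /pin; elim: (enum 'I_n) => //= i s ->; rewrite repZ. Qed.

Lemma pin_scalel n (xs : 'I_n -> g) (c : R) w :
  pin pi (fun i => c *: xs i) w = (c ^+ n)%:C *: pin pi xs w.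
Proof.
rewrite /pin -[in c ^+ n](size_enum_ord n); elim: (enum 'I_n) => [|i s IH] /=.
  by rewrite expr0 rmorph1 scale1r.
by rewrite IH repZl repZ scalerA -rmorphM exprS.
Qed.

Lemma pin_snoc n (xs : 'I_n -> g) e w : pin pi (snoc xs e) w = pin pi xs (pi e w).
Proof.
have widen_lift (j : 'I_n) : widen_ord (leqnSn n) j = lift ord_max j.
  by apply: ord_inj; rewrite lift_max.
rewrite /pin enum_ordSr foldr_rcons foldr_map snoc_max.
by elim: (enum 'I_n) => //= j s ->; rewrite widen_lift snoc_lift.
Qed.

Lemma pin_snocD n (xs : 'I_n -> g) e1 e2 w :
  pin pi (snoc xs (e1 + e2)) w = pin pi (snoc xs e1) w + pin pi (snoc xs e2) w.
Proof. by rewrite !pin_snoc repDl pinD. Qed.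

Lemma pin_snocZ n (xs : 'I_n -> g) (l : R) e w :
  pin pi (snoc xs (l *: e)) w = l%:C *: pin pi (snoc xs e) w.
Proof. by rewrite !pin_snoc repZl pinZ. Qed.

Lemma pin_cst0 n w : pin pi (fun _ : 'I_n.+1 => 0) w = 0.
Proof.
rewrite /pin enum_ordSr foldr_rcons foldr_map rep0l.
by elim: (enum 'I_n) => //= j s ->; rewrite rep0.
Qed.

(* [pi_n] is homogeneous of degree [n] in [xs], and continuity at [xs = 0]
   bounds it on a 0-neighbourhood into which [B] can be scaled. *)
Lemma pin_bounded n (B : set ('I_n -> g)) w : bounded_tuples B ->
  exists C, forall xs, B xs -> N (pin pi xs w) <= C.
Proof.
move=> HB.
have [U [U0 HU]] := pi_cont w (fun _ : 'I_n => 0) ltr01.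
have [r r_gt0 Hr] := HB _ (filter_forall _ U0).
set t := r + 1; have lt_rt : r < t by rewrite /t ltrDl.
have t_gt0 : 0 < t by apply: lt_trans lt_rt.
exists (t ^+ n * (1 + N (pin pi (fun _ : 'I_n => 0) w))) => xs Bxs.
have scaled := HU (fun i => t^-1 *: xs i) (fun i => Hr t lt_rt xs Bxs i i).
have -> : pin pi xs w = (t ^+ n)%:C *: pin pi (fun i => t^-1 *: xs i) w.
  rewrite pin_scalel scalerA -rmorphM -exprMn mulfV ?gt_eqF //.
  by rewrite expr1n rmorph1 scale1r.
rewrite (ipnormZ ip_inner) ger0_norm; last by rewrite exprn_ge0 // ltW.
rewrite ler_pM2l ?exprn_gt0 //.
apply: le_trans (ler_ipnorm_dist ip_inner _ (pin pi (fun _ : 'I_n => 0) w)) _.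
by rewrite lerD2r ltW.
Qed.

Lemma pin_snoc_near0 n (B : set ('I_n -> g)) w eps : bounded_tuples B -> 0 < eps ->
  \forall e \near (0 : g), forall xs, B xs -> N (pin pi (snoc xs e) w) <= eps.
Proof.
move=> HB eps_gt0.
have [U [U0 HU]] := pi_cont w (fun _ : 'I_n.+1 => 0) eps_gt0.
rewrite pin_cst0 in HU.
have [r r_gt0 Hr] := HB _ (filter_forall _ U0).
set t := r + 1; have lt_rt : r < t by rewrite /t ltrDl.
have t_gt0 : 0 < t by apply: lt_trans lt_rt.
have tn_neq0 : t ^+ n != 0 by rewrite expf_neq0 // gt_eqF.
apply: filterS (nbhs0Z (invr_neq0 tn_neq0) (filter_forall _ U0)) => _ [y Uy <-] xs Bxs.
(* Scaling [xs] by [t^-1] and the new last entry by [t ^+ n] leaves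
   [pi_(n+1)] unchanged. *)
set ys := snoc (fun i => t^-1 *: xs i) (t ^+ n *: ((t ^+ n)^-1 *: y)).
have Uys i : U i (ys i).
  case: (unliftP ord_max i) => [j ->|->]; rewrite /ys ?snoc_lift ?snoc_max.
    exact: (Hr t lt_rt xs Bxs j (lift ord_max j)).
  by rewrite scalerA mulfV // scale1r; exact: Uy.
have := HU ys Uys; rewrite subr0 => /ltW; congr (_ <= _); congr N.
rewrite /ys !pin_snoc pin_scalel repZl pinZ.
by rewrite scalerA -rmorphM -exprMn mulVf ?gt_eqF // expr1n rmorph1 scale1r.
Qed.

Definition cvgV0_seq tau (w : nat -> V) :=
  forall n (B : set ('I_n -> g)), admissible tau B -> forall eps : R, 0 < eps ->
    \forall k \near \oo, forall xs, B xs -> N (pin pi xs (w k)) <= eps.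

Lemma cvgV0_seq_bounded tau n (B : set ('I_n -> g)) w :
  admissible tau B -> cvgV0_seq tau w ->
  exists2 M, 0 < M & forall k xs, B xs -> N (pin pi xs (w k)) <= M.
Proof.
move=> HB Hw; have [K _ tail] := Hw _ _ HB 1 ltr01.
have head m : exists2 M, 0 < M &
    forall k, (k < m)%N -> forall xs, B xs -> N (pin pi xs (w k)) <= M.
  elim: m => [|m [M M_gt0 HM]]; first by exists 1.
  have [C HC] := pin_bounded (w m) (admissible_bounded HB).
  exists (Num.max M C) => [|k]; first by rewrite lt_max M_gt0.
  rewrite ltnS leq_eqVlt => /orP[/eqP -> | /HM HMk] xs Bxs;
    by rewrite le_max ?HC ?HMk ?orbT.
have [M M_gt0 HM] := head K.
exists (Num.max M 1) => [|k xs Bxs]; first by rewrite lt_max M_gt0.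
by have [/HM HMk|/tail HKk] := ltnP k K; rewrite le_max ?HMk ?HKk ?orbT.
Qed.

Definition barrel_set n (B : set ('I_n -> g)) (w : nat -> V) : set g :=
  [set e | forall k xs, B xs -> N (pin pi (snoc xs e) (w k)) <= 1].

Lemma closed_barrel_set n (B : set ('I_n -> g)) w : closed (barrel_set B w).
Proof.
move=> e cl_e k xs Bxs; rewrite leNgt; apply/negP => gt1.
set d := N (pin pi (snoc xs e) (w k)) - 1.
have d_gt0 : 0 < d by rewrite subr_gt0.
have [U [U0 HU]] := pi_cont (w k) (snoc xs e) d_gt0.
have := U0 ord_max; rewrite snoc_max => /cl_e[e' [De' Ue']].
have Uxs' i : U i (snoc xs e' i).
  case: (unliftP ord_max i) => [j ->|->]; last by rewrite snoc_max.
  by have := nbhs_singleton (U0 (lift ord_max j)); rewrite !snoc_lift.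
have := HU _ Uxs'; rewrite ipnorm_distC //.
have := ler_ipnorm_dist ip_inner (pin pi (snoc xs e) (w k)) (pin pi (snoc xs e') (w k)).
by have := De' k xs Bxs; rewrite /d; lra.
Qed.

Lemma convex_barrel_set n (B : set ('I_n -> g)) w : convex_set (barrel_set B w).
Proof.
move=> x y l; rewrite !in_setE => Dx Dy k xs Bxs.
have l_ge0 : 0 <= l%:num by exact: ge0.
have l_le1 : l%:num <= 1 by exact: le1.
rewrite [conv _ _ _]/= pin_snocD !pin_snocZ.
apply: le_trans (ler_ipnormD ip_inner _ _) _.
rewrite !ipnormZ // !ger0_norm ?subr_ge0 //.
by have := Dx k xs Bxs; have := Dy k xs Bxs; rewrite /unstable.onem; nra.
Qed.

Lemma circled_barrel_set n (B : set ('I_n -> g)) w : circled (barrel_set B w).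
Proof.
move=> l x l_le1 Dx k xs Bxs; rewrite pin_snocZ ipnormZ //.
by rewrite -[1]mul1r ler_pM ?normr_ge0 ?ipnorm_ge0 ?Dx.
Qed.

Lemma absorbing_barrel_set tau n (B : set ('I_n -> g)) w :
  admissible tau B -> cvgV0_seq tau w -> absorbing (barrel_set B w).
Proof.
move=> HB Hw x.
have [M M_gt0 HM] := cvgV0_seq_bounded (admissible_snoc x HB) Hw.
exists M^-1 => [|l l_le k xs Bxs]; first by rewrite invr_gt0.
rewrite pin_snocZ ipnormZ // -(mulVf (lt0r_neq0 M_gt0)).
by rewrite ler_pM ?normr_ge0 ?ipnorm_ge0 ?HM //; exists xs.
Qed.

Lemma cvgV0_seq_rep tau n (B : set ('I_n -> g)) (w : nat -> V) (eta : nat -> g) eps :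
  admissible tau B -> cvgV0_seq tau w -> eta @ \oo --> (0 : g) -> 0 < eps ->
  \forall k \near \oo, forall xs, B xs -> N (pin pi (snoc xs (eta k)) (w k)) <= eps.
Proof.
move=> HB Hw Heta eps_gt0.
have D0 : nbhs (0 : g) (barrel_set B w).
  apply: g_barrelled; [exact: closed_barrel_set | exact: convex_barrel_set |
    exact: circled_barrel_set | exact: absorbing_barrel_set HB Hw].
have : \forall k \near \oo, (( *:%R eps) @` barrel_set B w) (eta k).
  exact: Heta _ (nbhs0Z (lt0r_neq0 eps_gt0) D0).
apply: filterS => k [d Dd <-] xs Bxs.
rewrite pin_snocZ ipnormZ // ger0_norm; last exact: ltW.
by rewrite -[X in _ <= X]mulr1 ler_pM2l ?Dd.
Qed.

Lemma cvgV_subr0 tau (F : set_system R) {FF : Filter F} f l :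
  Defs.cvgV ip pi tau (fun s => f s - l) F 0 = Defs.cvgV ip pi tau f F l.
Proof.
rewrite propeqE; split=> Hf n B HB eps eps_gt0;
  apply: filterS (Hf n B HB eps eps_gt0) => s Hs xs Bxs;
  by have := Hs xs Bxs; rewrite subr0.
Qed.

Lemma cvgV_cst tau (F : set_system R) {FF : Filter F} (c : V) :
  Defs.cvgV ip pi tau (fun=> c) F c.
Proof.
move=> n B HB eps eps_gt0; apply: filterE => s xs Bxs.
by rewrite subrr pin0 ipnorm0 ?ltW.
Qed.

Lemma cvgV_add tau (F : set_system R) {FF : Filter F} f1 f2 l1 l2 :
  Defs.cvgV ip pi tau f1 F l1 -> Defs.cvgV ip pi tau f2 F l2 ->
  Defs.cvgV ip pi tau (fun s => f1 s + f2 s) F (l1 + l2).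
Proof.
move=> H1 H2 n B HB eps eps_gt0.
have eps2_gt0 : 0 < eps / 2 by rewrite divr_gt0.
apply: filterS2 (H1 n B HB _ eps2_gt0) (H2 n B HB _ eps2_gt0) => s h1 h2 xs Bxs.
rewrite opprD addrACA pinD.
apply: le_trans (ler_ipnormD ip_inner _ _) _.
by have := h1 xs Bxs; have := h2 xs Bxs; lra.
Qed.

Lemma cvgV_Mn tau (F : set_system R) {FF : Filter F} f l m :
  Defs.cvgV ip pi tau f F l -> Defs.cvgV ip pi tau (fun s => f s *+ m) F (l *+ m).
Proof.
move=> Hf; elim: m => [|m IH]; first exact: cvgV_cst.
have -> : (fun s => f s *+ m.+1) = (fun s => f s + f s *+ m).
  by apply: funext => s; rewrite mulrS.
by rewrite mulrS; exact: cvgV_add.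
Qed.

Lemma cvgV_sum tau (F : set_system R) {FF : Filter F} m
    (f : 'I_m -> R -> V) (l : 'I_m -> V) :
  (forall i, Defs.cvgV ip pi tau (f i) F (l i)) ->
  Defs.cvgV ip pi tau (fun s => \sum_(i < m) f i s) F (\sum_(i < m) l i).
Proof.
elim: m f l => [|m IH] f l Hf.
  have -> : (fun s => \sum_(i < 0) f i s) = (fun=> 0).
    by apply: funext => s; rewrite big_ord0.
  by rewrite big_ord0; exact: cvgV_cst.
have -> : (fun s => \sum_(i < m.+1) f i s) =
    (fun s => \sum_(i < m) f (widen_ord (leqnSn m) i) s + f ord_max s).
  by apply: funext => s; rewrite big_ord_recr.
by rewrite big_ord_recr; apply: cvgV_add => //; exact: IH.
Qed.

Lemma cvgV_quotient_sum tau (F : set_system R) {FF : Filter F} (t : R) m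
    (f : 'I_m -> R -> V) (C : 'I_m -> nat) (l : 'I_m -> V) :
  (forall i, Defs.cvgV ip pi tau (fun s => (s - t)^-1%:C *: (f i s - f i t)) F (l i)) ->
  Defs.cvgV ip pi tau
    (fun s => (s - t)^-1%:C *: (\sum_(i < m) f i s *+ C i - \sum_(i < m) f i t *+ C i))
    F (\sum_(i < m) l i *+ C i).
Proof.
move=> Hf.
have -> : (fun s => (s - t)^-1%:C *:
                      (\sum_(i < m) f i s *+ C i - \sum_(i < m) f i t *+ C i)) =
    (fun s => \sum_(i < m) ((s - t)^-1%:C *: (f i s - f i t)) *+ C i).
  apply: funext => s; rewrite -sumrB scaler_sumr.
  by apply: eq_bigr => i _; rewrite -mulrnBl scalerMnr.
by apply: cvgV_sum => i; exact: cvgV_Mn.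
Qed.

Lemma cvgV_rep_vec tau (F : set_system R) {FF : Filter F} x f l :
  Defs.cvgV ip pi tau f F l -> Defs.cvgV ip pi tau (fun s => pi x (f s)) F (pi x l).
Proof.
move=> Hf n B HB eps eps_gt0.
apply: filterS (Hf _ _ (admissible_snoc x HB) eps eps_gt0) => s Hs xs Bxs.
by rewrite -repB -pin_snoc; apply: Hs; exists xs.
Qed.

Lemma cvgV_rep_lie0 tau (F : set_system R) {FF : Filter F} (a : R -> g) v :
  a @ F --> (0 : g) -> Defs.cvgV ip pi tau (fun s => pi (a s) v) F 0.
Proof.
move=> Ha n B HB eps eps_gt0.
have : \forall s \near F, forall xs, B xs -> N (pin pi (snoc xs (a s)) v) <= eps.
  exact: Ha _ (pin_snoc_near0 v (admissible_bounded HB) eps_gt0).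
by apply: filterS => s small xs Bxs; rewrite subr0 -pin_snoc; exact: small.
Qed.

Lemma cvgV_rep0 tau (A : set R) (t : R) (a : R -> g) (b : R -> V) :
  a @ within A (nbhs t) --> (0 : g) -> Defs.cvgV ip pi tau b (within A (nbhs t)) 0 ->
  Defs.cvgV ip pi tau (fun s => pi (a s) (b s)) (within A (nbhs t)) 0.
Proof.
move=> Ha Hb n B HB eps eps_gt0; apply: within_nbhs_seq => u u_cvg.
have Hbu : cvgV0_seq tau (b \o u).
  move=> m B' HB' e e_gt0.
  have Hbe : \forall s \near within A (nbhs t),
      forall xs, B' xs -> N (pin pi xs (b s)) <= e.
    apply: filterS (Hb m B' HB' e e_gt0) => s Hs xs B'xs.
    by rewrite -[b s]subr0; exact: Hs.
  exact: u_cvg _ Hbe.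
apply: filterS (cvgV0_seq_rep HB Hbu (cvg_comp _ _ u_cvg Ha) eps_gt0) => k Hk xs Bxs.
by rewrite subr0 -pin_snoc; exact: Hk.
Qed.

Lemma cvgV_rep tau (A : set R) (t : R) (a : R -> g) (b : R -> V) a0 b0 :
  a @ within A (nbhs t) --> a0 -> Defs.cvgV ip pi tau b (within A (nbhs t)) b0 ->
  Defs.cvgV ip pi tau (fun s => pi (a s) (b s)) (within A (nbhs t)) (pi a0 b0).
Proof.
move=> Ha Hb; rewrite -cvgV_subr0.
have -> : (fun s => pi (a s) (b s) - pi a0 b0) = (fun s =>
    (pi a0 (b s) - pi a0 b0) + pi (a s - a0) (b s - b0) + pi (a s - a0) b0).
  apply: funext => s; rewrite !repBl !repB.
  by rewrite (addrC (_ - _)) subrK addrA subrK.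
have -> : (0 : V) = 0 + 0 + 0 by rewrite !addr0.
apply: cvgV_add; first apply: cvgV_add.
- by rewrite cvgV_subr0; exact: cvgV_rep_vec.
- by apply: cvgV_rep0 (cvg_subr0 Ha) _; rewrite cvgV_subr0.
- exact: cvgV_rep_lie0 (cvg_subr0 Ha).
Qed.

Lemma cvgV_rep_quotient tau (A : set R) (t : R) (a : R -> g) (b : R -> V) a' b' :
  a @ within A (nbhs t) --> a t ->
  (fun s => (s - t)^-1 *: (a s - a t)) @ within A (nbhs t) --> a' ->
  Defs.cvgV ip pi tau (fun s => (s - t)^-1%:C *: (b s - b t)) (within A (nbhs t)) b' ->
  Defs.cvgV ip pi tau (fun s => (s - t)^-1%:C *: (pi (a s) (b s) - pi (a t) (b t)))
    (within A (nbhs t)) (pi (a t) b' + pi a' (b t)).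
Proof.
move=> Ha Ha' Hb.
have -> : (fun s => (s - t)^-1%:C *: (pi (a s) (b s) - pi (a t) (b t))) =
    (fun s => pi (a s) ((s - t)^-1%:C *: (b s - b t)) +
              pi ((s - t)^-1 *: (a s - a t)) (b t)).
  by apply: funext => s; rewrite repZ repZl -scalerDr repB repBl addrA subrK.
apply: cvgV_add; first exact: cvgV_rep.
by apply: cvgV_rep Ha' _; exact: cvgV_cst.
Qed.

End Representation.

Lemma leibniz_sumS (M : zmodType) (T : nat -> nat -> M) k :
  \sum_(i < k.+1) (T i (k - i)%N.+1 + T i.+1 (k - i)%N) *+ 'C(k, i) =
  \sum_(i < k.+2) T i (k.+1 - i)%N *+ 'C(k.+1, i).
Proof.
rewrite big_ord_recl [RHS]big_ord_recl /= !subn0 !bin0 !mulr1n.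
under eq_bigr do rewrite mulrnDl.
rewrite big_split /=.
under [in RHS]eq_bigr => i _ do rewrite /bump /= add1n subSS binS mulrnDr.
rewrite [in RHS]big_split /= -!addrA; congr (_ + _).
rewrite [X in _ = X + _]big_ord_recr /= bin_small // mulr0n addr0.
rewrite [X in _ = _ + X]big_ord_recl /= bin0 mulr1n subn0 [in RHS]addrCA.
by congr (_ + (_ + _)); apply: eq_bigr => i _; rewrite /bump /= add1n subnSK.
Qed.

Lemma le_ext_trans i j n : (i <= j)%N -> le_ext j n -> le_ext i n.
Proof. by case: n => //= m; exact: leq_trans. Qed.

Lemma lt_ext_trans i j n : (i <= j)%N -> lt_ext j n -> lt_ext i n.
Proof. by case: n => //= m; exact: leq_ltn_trans. Qed.

Lemma lt_ext_le j n : lt_ext j n -> le_ext j n.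
Proof. by case: n => //= m /ltnW. Qed.

Local Close Scope complex_scope.

Theorem proposition3p18 (R : realType) (g : tvsType R) (br : g -> g -> g)
    (V : lmodType R[i]) (ip : V -> V -> R[i]) (pi : g -> V -> V)
    (tau : topV) (n : option nat) (I : interval R)
    (xis : nat -> R -> g) (psis : nat -> R -> V) :
  lie_bracket br -> barrelled g ->
  inner_product ip -> unitary_rep br ip pi -> continuous_rep ip pi ->
  Cng I n xis -> CnV ip pi tau I n psis ->
  CnV ip pi tau I n
    (fun k t => \sum_(j < k.+1) pi (xis j t) (psis (k - j)%N t) *+ 'C(k, j)).
Proof.
move=> _ g_barrelled ip_inner pi_rep pi_cont [xi_cont xi_diff] [psi_cont psi_diff].
split=> [k k_le t tI | k k_lt t tI].
  apply: (cvgV_sum ip_inner pi_rep) => i; apply: (cvgV_Mn ip_inner pi_rep).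
  apply: (cvgV_rep ip_inner pi_rep pi_cont g_barrelled).
    by apply: xi_cont => //; apply: le_ext_trans k_le; exact: leq_ord.
  by apply: psi_cont => //; apply: le_ext_trans k_le; exact: leq_subr.
rewrite -(leibniz_sumS (fun i j => pi (xis i t) (psis j t))).
apply: (cvgV_quotient_sum ip_inner pi_rep) => i.
have xi_lt : lt_ext i n by apply: lt_ext_trans k_lt; exact: leq_ord.
apply: (cvgV_rep_quotient ip_inner pi_rep pi_cont g_barrelled).
- apply: cvg_trans (xi_cont i (lt_ext_le xi_lt) t tI).
  by apply: cvg_app; apply: within_subset => s [].
- exact: xi_diff.
- by apply: psi_diff => //; apply: lt_ext_trans k_lt; exact: leq_subr.
Qed.
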